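(* If $l = 1$, then the hypergraph $\mathcal{H}$ (defined in the context) is $C_3$-free, i.e. there do not exist three distinct edges $E_1,E_2,E_3$ of $\mathcal{H}$ and three distinct vertices $v_1,v_2,v_3$ with $\{v_1,v_2\}\subseteq E_1$, $\{v_2,v_3\}\subseteq E_2$, $\{v_3,v_1\}\subseteq E_3$.
   Context: Let $r \geq 2$ and $l \geq 1$ be integers and $q$ a power of an odd prime. Let $\alpha_1, \dots, \alpha_r$ be distinct elements of $\mathbb{F}_q$, and let $m_1, \dots, m_l$ be distinct elements of $\mathbb{F}_q^* = \mathbb{F}_q\setminus\{0\}$ such that $m_s(\alpha_k - \alpha_i) \neq m_t(\alpha_k - \alpha_j)$ whenever $1 \leq s,t \leq l$ and $i,j,k$ are distinct integers in $\{1,\dots,r\}$. For $1 \leq i \leq r$ let $V_i = \mathbb{F}_q \times \mathbb{F}_q \times \{i\}$. For $x,y \in \mathbb{F}_q$, $a \in \mathbb{F}_q^*$, $s \in \{1,\dots,l\}$ let \[ e(x,y,a,m_s) = \{(x + \alpha_i m_s a,\; y + \alpha_i m_s a^2,\; i) : 1 \leq i \leq r\}. \] $\mathcal{H}$ is the $r$-uniform hypergraph with vertex set $V_1 \cup \dots \cup V_r$ and edge set $\{e(x,y,a,m_s) : x,y \in \mathbb{F}_q,\ a \in \mathbb{F}_q^*,\ 1 \leq s \leq l\}$. A hypergraph is $C_3$-free if it contains no Berge triangle (three distinct edges and three distinct vertices as described in the claim). *)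

From HB Require Import structures.
From mathcomp Require Import all_boot all_order all_algebra all_field.
Set Implicit Arguments. Unset Strict Implicit. Unset Printing Implicit Defensive.
Import GRing.Theory.
Local Open Scope ring_scope.

(* Vertices of H: V_1 u ... u V_r with V_i = F_q x F_q x {i}; index i ranges over 'I_r. *)
Definition vertex (F : finFieldType) (r : nat) : finType := (F * F * 'I_r)%type.

Definition edge (F : finFieldType) (r : nat) (alpha : 'I_r -> F)
  (x y a ms : F) : {set vertex F r} :=
  [set ((x + alpha i * ms * a, y + alpha i * ms * a ^+ 2), i) | i : 'I_r].

Definition is_edge (F : finFieldType) (r l : nat) (alpha : 'I_r -> F)
  (m : 'I_l -> F) (E : {set vertex F r}) : Prop :=
  exists (x y a : F) (s : 'I_l), a != 0 /\ E = edge alpha x y a (m s).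

Definition C3_free (F : finFieldType) (r l : nat) (alpha : 'I_r -> F)
  (m : 'I_l -> F) : Prop :=
  ~ exists (E1 E2 E3 : {set vertex F r}) (v1 v2 v3 : vertex F r),
      [/\ is_edge alpha m E1, is_edge alpha m E2 & is_edge alpha m E3] /\
      [/\ E1 != E2, E2 != E3 & E1 != E3] /\
      [/\ v1 != v2, v2 != v3 & v1 != v3] /\
      [/\ (v1 \in E1) && (v2 \in E1), (v2 \in E2) && (v3 \in E2)
        & (v3 \in E3) && (v1 \in E3)].

(** If edges with slopes
    [c1, c2, c3] pairwise meet in the parts [i, j, k], the three translation
    differences around the triangle sum to zero, giving the cyclic relations
    [sum (alpha_i - alpha_j) c = 0] and [sum (alpha_i - alpha_j) c^2 = 0].  Since
    [(alpha_i - alpha_j) (c1 - c3) (c1 - c2)] is the quadratic relation minus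
    [c2 + c3] times the linear one, these force [c1 = c3]; and two edges with the
    same slope through a common vertex coincide. *)

From HB Require Import structures.
From mathcomp Require Import all_boot all_order all_algebra all_field.
From mathcomp Require Import ring.
Set Implicit Arguments.
Unset Strict Implicit.
Import GRing.Theory.
Local Open Scope ring_scope.

Lemma eq_of_cyclic_moments (R : idomainType) (ai aj ak c1 c2 c3 : R) :
  ai != aj -> ai != ak ->
  (ai - aj) * c1 + (aj - ak) * c2 + (ak - ai) * c3 = 0 ->
  (ai - aj) * c1 ^+ 2 + (aj - ak) * c2 ^+ 2 + (ak - ai) * c3 ^+ 2 = 0 ->
  c1 = c3.
Proof.
move=> nij nik S1 S2.
have : (ai - aj) * (c1 - c3) * (c1 - c2) = 0.
  have -> : (ai - aj) * (c1 - c3) * (c1 - c2) =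
      ((ai - aj) * c1 ^+ 2 + (aj - ak) * c2 ^+ 2 + (ak - ai) * c3 ^+ 2)
      - (c2 + c3) * ((ai - aj) * c1 + (aj - ak) * c2 + (ak - ai) * c3) by ring.
  by rewrite S1 S2 mulr0 subr0.
move/eqP; rewrite !mulf_eq0 subr_eq0 (negbTE nij) /= !subr_eq0.
case/orP => /eqP // c12.
have : (ai - ak) * (c2 - c3) = 0.
  rewrite -S1 c12; ring.
by move/eqP; rewrite c12 mulf_eq0 !subr_eq0 (negbTE nik) /= => /eqP.
Qed.

Lemma cyclic_translation_relation (R : comPzRingType) (g : R -> R)
    (ai aj ak mu x1 x2 x3 c1 c2 c3 : R) :
  x1 + ai * mu * g c1 = x3 + ai * mu * g c3 ->
  x1 + aj * mu * g c1 = x2 + aj * mu * g c2 ->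
  x2 + ak * mu * g c2 = x3 + ak * mu * g c3 ->
  mu * ((ai - aj) * g c1 + (aj - ak) * g c2 + (ak - ai) * g c3) = 0.
Proof.
move=> e1 e2 e3.
have -> : mu * ((ai - aj) * g c1 + (aj - ak) * g c2 + (ak - ai) * g c3) =
    (x1 + ai * mu * g c1 - (x3 + ai * mu * g c3))
  + (x2 + aj * mu * g c2 - (x1 + aj * mu * g c1))
  + (x3 + ak * mu * g c3 - (x2 + ak * mu * g c2)) by ring.
by rewrite e1 e2 e3 !subrr !addr0.
Qed.

Section SingleMultiplier.

Variables (F : finFieldType) (r : nat) (alpha : 'I_r -> F) (mu : F).

Lemma mem_edge x y a (v : vertex F r) :
  (v \in edge alpha x y a mu) =
  (v.1.1 == x + alpha v.2 * mu * a) && (v.1.2 == y + alpha v.2 * mu * a ^+ 2).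
Proof.
apply/imsetP/andP => [[i _ ->] //= | [/eqP e1 /eqP e2]].
by exists v.2 => //; case: v e1 e2 => [[p w] i] /= -> ->.
Qed.

Lemma edge_part_inj x y a (u v : vertex F r) :
  u \in edge alpha x y a mu -> v \in edge alpha x y a mu -> u.2 = v.2 -> u = v.
Proof.
case: u v => [[p1 w1] i] [[p2 w2] j] /=.
rewrite !mem_edge /= => /andP[/eqP -> /eqP ->] /andP[/eqP -> /eqP ->] -> //.
Qed.

Lemma edge_eq_of_common_vertex x1 y1 x2 y2 a (v : vertex F r) :
  v \in edge alpha x1 y1 a mu -> v \in edge alpha x2 y2 a mu ->
  edge alpha x1 y1 a mu = edge alpha x2 y2 a mu.
Proof.
rewrite !mem_edge => /andP[/eqP -> /eqP ->] /andP[/eqP e1 /eqP e2].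
by rewrite (addIr _ e1) (addIr _ e2).
Qed.

Hypotheses (alpha_inj : injective alpha) (mu_neq0 : mu != 0).

Lemma edge_triangle_collapse x1 y1 c1 x2 y2 c2 x3 y3 c3 (v1 v2 v3 : vertex F r) :
  v1 \in edge alpha x1 y1 c1 mu -> v2 \in edge alpha x1 y1 c1 mu ->
  v2 \in edge alpha x2 y2 c2 mu -> v3 \in edge alpha x2 y2 c2 mu ->
  v3 \in edge alpha x3 y3 c3 mu -> v1 \in edge alpha x3 y3 c3 mu ->
  v1 != v2 -> v1 != v3 -> edge alpha x1 y1 c1 mu = edge alpha x3 y3 c3 mu.
Proof.
move=> v1E1 v2E1 v2E2 v3E2 v3E3 v1E3 nv12 nv13.
have alpha12 : alpha v1.2 != alpha v2.2.
  by apply: contra nv12 => /eqP/alpha_inj/(edge_part_inj v1E1 v2E1)->.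
have alpha13 : alpha v1.2 != alpha v3.2.
  by apply: contra nv13 => /eqP/alpha_inj/(edge_part_inj v1E3 v3E3)->.
move: (v1E1) v2E1 v2E2 v3E2 v3E3 (v1E3); rewrite !mem_edge.
move=> /andP[/eqP p11 /eqP w11] /andP[/eqP p21 /eqP w21].
move=> /andP[/eqP p22 /eqP w22] /andP[/eqP p32 /eqP w32].
move=> /andP[/eqP p33 /eqP w33] /andP[/eqP p13 /eqP w13].
have cancel_mu (X : F) : mu * X = 0 -> X = 0.
  by move/eqP; rewrite mulf_eq0 (negbTE mu_neq0) => /eqP.
move/cancel_mu: (cyclic_translation_relation (g := fun c => c)
    (etrans (esym p11) p13) (etrans (esym p21) p22) (etrans (esym p32) p33))
  => /= linear_rel.
move/cancel_mu: (cyclic_translation_relation (g := fun c => c ^+ 2)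
    (etrans (esym w11) w13) (etrans (esym w21) w22) (etrans (esym w32) w33))
  => /= quadratic_rel.
rewrite (eq_of_cyclic_moments alpha12 alpha13 linear_rel quadratic_rel) in v1E1 *.
exact: edge_eq_of_common_vertex v1E1 v1E3.
Qed.

End SingleMultiplier.

Theorem lemma3p6 (F : finFieldType) (r l : nat)
  (alpha : 'I_r -> F) (m : 'I_l -> F) :
  (2 \notin [pchar F])%N ->
  (2 <= r)%N ->
  injective alpha ->
  injective m ->
  (forall s, m s != 0) ->
  (forall (s t : 'I_l) (i j k : 'I_r), i != j -> j != k -> i != k ->
     m s * (alpha k - alpha i) != m t * (alpha k - alpha j)) ->
  l = 1%N ->
  C3_free alpha m.
Proof.
move=> _ _ alpha_inj _ m_neq0 _ l1; subst l.
have m_const (s : 'I_1) : m s = m ord0 by rewrite (ord1 s).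
case=> E1 [E2 [E3 [v1 [v2 [v3 [[h1 h2 h3] [[_ _ nE13] [[nv12 _ nv13]
  [/andP[v1E1 v2E1] /andP[v2E2 v3E2] /andP[v3E3 v1E3]]]]]]]]]].
case: h1 h2 h3 => [x1 [y1 [c1 [s1 [_ eE1]]]]] [x2 [y2 [c2 [s2 [_ eE2]]]]]
  [x3 [y3 [c3 [s3 [_ eE3]]]]].
rewrite {}eE1 {}eE2 {}eE3 !m_const in nE13 v1E1 v2E1 v2E2 v3E2 v3E3 v1E3.
apply/(negP nE13)/eqP.
exact: (edge_triangle_collapse alpha_inj (m_neq0 ord0)
  v1E1 v2E1 v2E2 v3E2 v3E3 v1E3 nv12 nv13).
Qed.
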